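(* Suppose $0<\delta < \frac{8}{5} g^{-k-3} k^{-2}$. Then for every $\vec \theta \in R_{\delta}^A$ we have $|\Phi(\vec \theta)| \leq 1 - \frac{1}{10} g^{-k-2}$.
   Context: Let $g\ge 2$, $k\ge 2$ be integers, $\mathbb Z_g$ the integers mod $g$, and $d=\binom{k}{2}(g-1)$. Index the coordinates of $\mathbb R^d$ by pairs $(\{i,j\},a)$ with $1\le i<j\le k$ and $a\in\mathbb Z_g\setminus\{0\}$. Define $Z:(\mathbb Z_g)^k\to\mathbb R^d$ by $[Z(\vec x)]_{\{i,j\},a}=1-1/g$ if $x_i-x_j=a$ and $-1/g$ otherwise. Define $\Phi(\vec\theta)=\sum_{\vec x\in(\mathbb Z_g)^k} g^{-k}e^{i\vec\theta\cdot Z(\vec x)}$, $\Lambda=\{\vec\theta\in\mathbb R^d: |\Phi(\vec\theta)|=1\}$, $\Lambda_0=\Lambda\cap[-\pi,\pi)^d$. For $\vec\theta\in[-\pi,\pi)^d$ and $\delta>0$ let $B_\delta(\vec\theta)=\{\vec\mu\in[-\pi,\pi)^d: \vec\mu\equiv\vec\theta+\vec\zeta \pmod{2\pi}$ componentwise, for some $\vec\zeta$ with $|\zeta_{\{i,j\},a}|<\delta$ for all coordinates$\}$. Let $L=\{\vec\theta\in[-\pi,\pi)^d: \theta_{\{i,j\},a}\equiv 0 \pmod{2\pi/g}$ for all coordinates$\}$ and $R_\delta^A=\bigcup_{\vec\eta\in L\setminus\Lambda_0}B_\delta(\vec\eta)$. *)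

From Stdlib Require Import Reals ZArith.
From mathcomp Require Import all_boot all_algebra.
From mathcomp Require Import Rstruct.

Set Implicit Arguments.
Unset Strict Implicit.
Unset Printing Implicit Defensive.

Open Scope R_scope.

(* Coordinates of R^d, d = C(k,2)(g-1): pairs ({i,j}, a) with i < j
   (0-based indices in 'I_k) and a in Z_g \ {0} (a : 'I_g, a <> 0). *)
Definition Coord (g k : nat) : Type :=
  {p : ('I_k * 'I_k) * 'I_g | ((p.1.1 < p.1.2)%N && (nat_of_ord p.2 != 0%N))}.

Definition vecZg (g k : nat) : finType := {ffun 'I_k -> 'I_g}.

(* x_i - x_j = a in Z_g *)
Definition diff_is (g k : nat) (x : vecZg g k) (c : Coord g k) : bool :=
  let: ((i, j), a) := sval c in
  ((x i + (g - x j)) %% g == nat_of_ord a)%N.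

Definition Zvec (g k : nat) (x : vecZg g k) (c : Coord g k) : R :=
  if diff_is x c then (1 - / INR g) else (- / INR g).

Definition dotZ (g k : nat) (theta : Coord g k -> R) (x : vecZg g k) : R :=
  \big[Rplus/0]_(c : Coord g k) (theta c * Zvec x c).

(* Real and imaginary parts of Phi(theta) = sum_x g^{-k} e^{i theta.Z(x)} *)
Definition RePhi (g k : nat) (theta : Coord g k -> R) : R :=
  \big[Rplus/0]_(x : vecZg g k) (/ (INR g ^ k) * cos (dotZ theta x)).
Definition ImPhi (g k : nat) (theta : Coord g k -> R) : R :=
  \big[Rplus/0]_(x : vecZg g k) (/ (INR g ^ k) * sin (dotZ theta x)).

Definition absPhi (g k : nat) (theta : Coord g k -> R) : R :=
  sqrt (RePhi theta ^ 2 + ImPhi theta ^ 2).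

Definition inLambda (g k : nat) (theta : Coord g k -> R) : Prop :=
  absPhi theta = 1.

Definition inBox (g k : nat) (theta : Coord g k -> R) : Prop :=
  forall c, - PI <= theta c < PI.

Definition inLambda0 (g k : nat) (theta : Coord g k -> R) : Prop :=
  inLambda theta /\ inBox theta.

Definition inL (g k : nat) (theta : Coord g k -> R) : Prop :=
  inBox theta /\
  forall c, exists m : Z, theta c = IZR m * (2 * PI / INR g).

Definition inB (g k : nat) (delta : R) (eta mu : Coord g k -> R) : Prop :=
  inBox mu /\
  exists zeta : Coord g k -> R,
    (forall c, Rabs (zeta c) < delta) /\
    (forall c, exists m : Z, mu c = eta c + zeta c + 2 * PI * IZR m).

Definition inRA (g k : nat) (delta : R) (theta : Coord g k -> R) : Prop :=
  exists eta : Coord g k -> R,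
    inL eta /\ ~ inLambda0 eta /\ inB delta eta theta.

(* Expanding |Phi|^2 turns it into the average over pairs (x, y) of
   cos (theta.Z(x) - theta.Z(y)), and theta.Z(x) - theta.Z(y) is the sum of the
   theta_c weighted by the integers Z(x)_c - Z(y)_c in {-1, 0, 1}.  Write
   theta = eta + zeta + 2 pi m with eta in L.  For the lattice point eta every
   phase difference is 2 pi / g times an integer, so its cosine is either 1 or at
   most 1 - 2 / g^2.  Since |Phi(eta)| < 1 they are not all 1, and since the
   pairs with cosine 1 form an equivalence relation, every x has a partner y with
   cosine at most 1 - 2 / g^2.  The perturbation zeta moves every cosine by at
   most (number of coordinates) * delta <= k^2 g delta < (8/5) g^(-k-2), so
   |Phi(theta)|^2 <= 1 + (8/5) g^(-k-2) - 2 g^(-k-2). *)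

From Stdlib Require Import Reals ZArith Lra Lia Classical.
From mathcomp Require Import all_boot all_algebra.
From mathcomp Require Import Rstruct.

Set Implicit Arguments.
Unset Strict Implicit.
Unset Printing Implicit Defensive.

Open Scope R_scope.

Lemma Rabs_cos_sub_le a b : Rabs (cos a - cos b) <= Rabs (a - b).
Proof.
have [c [-> _]] := MVT_abs cos (fun c => - sin c) b a (fun c _ => derivable_pt_lim_cos c).
rewrite Rabs_Ropp; have := Rabs_le (sin c) 1 (SIN_bound c).
have := Rabs_pos (sin c); have := Rabs_pos (a - b); nra.
Qed.

Lemma cos_add_2PI_IZR x z : cos (x + 2 * PI * IZR z) = cos x.
Proof.
have cos_nat y n : cos (y + 2 * PI * INR n) = cos y.
  by rewrite -(cos_period y n); congr cos; ring.
case: (Z_le_gt_dec 0 z) => hz.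
  by rewrite -(Z2Nat.id z hz) -INR_IZR_INZ cos_nat.
rewrite -(cos_nat _ (Z.to_nat (- z))) INR_IZR_INZ Z2Nat.id; last lia.
by rewrite opp_IZR; congr cos; ring.
Qed.

Lemma cos_sub_eq1 a b : cos a = 1 -> cos b = 1 -> cos (a - b) = 1.
Proof.
have sin0 y : cos y = 1 -> sin y = 0.
  by move=> hy; apply: Rsqr_0_uniq; rewrite sin2 hy /Rsqr; ring.
by move=> ha hb; rewrite cos_minus ha hb sin0 // sin0 //; ring.
Qed.

Lemma sin_ge_cubic a : 0 <= a <= PI -> a - a ^ 3 / 6 <= sin a.
Proof.
move=> [ha0 haPI]; have [+ _] := sin_bound a 0 ha0 haPI.
suff -> : sin_approx a (2 * 0 + 1) = a - a ^ 3 / 6 by [].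
by rewrite /sin_approx /sin_term /=; field.
Qed.

Lemma sin_PI_div_ge (G : R) : 2 <= G -> / G <= sin (PI / G).
Proof.
(* sin b >= b - b^3/6 >= b/3 as b = PI/G <= 2, and b/3 >= 1/G as PI >= 3. *)
move=> hG; have hPI := PI2_3_2; have hPI4 := PI_4.
have hG' : 0 < / G by apply: Rinv_0_lt_compat; lra.
have hb3 : 3 * / G <= PI / G by apply: Rmult_le_compat_r; lra.
have hb2 : PI / G <= PI / 2.
  by apply: Rmult_le_compat_l; [lra | apply: Rinv_le_contravar; lra].
have : PI / G - (PI / G) ^ 3 / 6 <= sin (PI / G) by apply: sin_ge_cubic; lra.
set b := PI / G in hb3 hb2 *; have hb : 0 <= b <= 2 by lra.
nra.
Qed.

Lemma sin_PI_div_le_sin (G a : R) :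
  2 <= G -> PI / G <= a <= PI - PI / G -> sin (PI / G) <= sin a.
Proof.
move=> hG ha; have hPI := PI_RGT_0.
have hb0 : 0 < PI / G by apply: Rdiv_lt_0_compat; lra.
have hb2 : PI / G <= PI / 2.
  by apply: Rmult_le_compat_l; [lra | apply: Rinv_le_contravar; lra].
case: (Rle_lt_dec a (PI / 2)) => haPI2.
  by apply: sin_incr_1; lra.
by rewrite -[sin a]sin_PI_x; apply: sin_incr_1; lra.
Qed.

Lemma cos_2PI_div_mul_dichotomy (g : nat) (z : Z) : (2 <= g)%N ->
  cos (2 * PI / INR g * IZR z) = 1 \/
  cos (2 * PI / INR g * IZR z) <= 1 - 2 / INR g ^ 2.
Proof.
move=> /leP hg; set gz := Z.of_nat g.
have hG : INR g = IZR gz by apply: INR_IZR_INZ.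
have hG2 : 2 <= INR g by rewrite hG; apply: IZR_le; lia.
have r_bound := Z.mod_pos_bound z gz.
have -> : 2 * PI / INR g * IZR z
    = 2 * (PI / INR g * IZR (Z.modulo z gz)) + 2 * PI * IZR (Z.div z gz).
  rewrite {1}(Z.div_mod z gz); last lia.
  by rewrite plus_IZR mult_IZR -hG; field; lra.
rewrite cos_add_2PI_IZR cos_2a_sin.
case: (Z.eq_dec (Z.modulo z gz) 0) => [-> | r_ne0].
  by left; rewrite Rmult_0_r sin_0; ring.
right; set a := PI / INR g * IZR (Z.modulo z gz).
have hr1 : 1 <= IZR (Z.modulo z gz) by apply: IZR_le; lia.
have hr2 : IZR (Z.modulo z gz) + 1 <= INR g.
  by rewrite hG -plus_IZR; apply: IZR_le; lia.
have hPI : PI = PI / INR g * INR g by field; lra.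
have hb0 : 0 < PI / INR g by apply: Rdiv_lt_0_compat; [exact: PI_RGT_0 | lra].
have hsin : / INR g <= sin a.
  apply: Rle_trans (sin_PI_div_ge hG2) (sin_PI_div_le_sin hG2 _); rewrite /a; nra.
have hG0 : 0 < / INR g by apply: Rinv_0_lt_compat; lra.
have -> : 2 / INR g ^ 2 = 2 * (/ INR g * / INR g) by field; lra.
nra.
Qed.

Lemma bigR_le (T : finType) (F G : T -> R) :
  (forall x, F x <= G x) -> \big[Rplus/0]_x F x <= \big[Rplus/0]_x G x.
Proof.
move=> FG; apply: (big_ind2 (fun a b => a <= b)) => //; first lra.
by move=> a b c d; lra.
Qed.

Lemma bigR_abs_le (T : finType) (F G : T -> R) :
  (forall x, Rabs (F x) <= G x) -> Rabs (\big[Rplus/0]_x F x) <= \big[Rplus/0]_x G x.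
Proof.
move=> FG; apply: (big_ind2 (fun a b => Rabs a <= b)) => //.
  by rewrite Rabs_R0; lra.
by move=> a b c d ab cd; apply: Rle_trans (Rabs_triang a c) _; lra.
Qed.

Lemma bigR_const (T : finType) (a : R) : \big[Rplus/0]_(x : T) a = INR #|T| * a.
Proof.
rewrite big_const; elim: #|T| => [|n IHn]; first by rewrite /=; ring.
by rewrite iterS IHn S_INR; ring.
Qed.

Lemma bigR_sub (T : finType) (F G : T -> R) :
  \big[Rplus/0]_x (F x - G x) = \big[Rplus/0]_x F x - \big[Rplus/0]_x G x.
Proof. by apply: (big_rec3 (fun a b c => c = a - b)) => [|i a b c _ ->]; ring. Qed.

Lemma bigR_delta (T : finType) (y0 : T) (a : R) :
  \big[Rplus/0]_y (if y == y0 then a else 0) = a.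
Proof. by rewrite (bigD1 y0) //= eqxx big1 => [|y /negbTE ->]; ring. Qed.

Definition Rint (r : R) : Prop := exists z : Z, r = IZR z.

Lemma Rint_mul r s : Rint r -> Rint s -> Rint (r * s).
Proof. by move=> [m ->] [n ->]; exists (Z.mul m n); rewrite mult_IZR. Qed.

Lemma Rint_sum (T : finType) (F : T -> R) :
  (forall x, Rint (F x)) -> Rint (\big[Rplus/0]_x F x).
Proof.
move=> FZ; apply: (big_ind Rint) => //; first by exists Z0.
by move=> _ _ [m ->] [n ->]; exists (Z.add m n); rewrite plus_IZR.
Qed.

Section SumOfCis.

Variables (T : finType) (w : R).

Lemma norm2_sum_cis (f : T -> R) :
  (\big[Rplus/0]_x (w * cos (f x))) ^ 2 + (\big[Rplus/0]_x (w * sin (f x))) ^ 2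
  = \big[Rplus/0]_x \big[Rplus/0]_y (w * w * cos (f x - f y)).
Proof.
rewrite /pow !Rmult_1_r !big_distrl -big_split; apply: eq_bigr => x _ /=.
rewrite !big_distrr -big_split; apply: eq_bigr => y _ /=.
by rewrite cos_minus; ring.
Qed.

Hypothesis card_w : INR #|T| * w = 1.

Lemma norm2_sum_cis_eq1 (f : T -> R) :
  (forall x y, cos (f x - f y) = 1) ->
  (\big[Rplus/0]_x (w * cos (f x))) ^ 2 + (\big[Rplus/0]_x (w * sin (f x))) ^ 2 = 1.
Proof.
move=> cos1; rewrite norm2_sum_cis.
under eq_bigr => x _ do under eq_bigr => y _ do rewrite cos1 Rmult_1_r.
rewrite !bigR_const; transitivity ((INR #|T| * w) * (INR #|T| * w)); first ring.
by rewrite card_w; ring.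
Qed.

Lemma norm2_sum_cis_le (f h : T -> R) (eps c : R) :
  (forall x y, cos (f x - f y) <= cos (h x - h y) + eps) ->
  (forall x, exists y, cos (h x - h y) <= 1 - c) ->
  (\big[Rplus/0]_x (w * cos (f x))) ^ 2 + (\big[Rplus/0]_x (w * sin (f x))) ^ 2
  <= 1 + eps - c * w.
Proof.
move=> near far; rewrite norm2_sum_cis; set N := INR #|T|.
have ww : 0 <= w * w by nra.
have row x : \big[Rplus/0]_y (w * w * cos (f x - f y)) <= w * w * (N * (1 + eps) - c).
  have [y0 hy0] := far x.
  apply: Rle_trans (bigR_le (G := fun y => w * w * (1 + eps)
                       - (if y == y0 then w * w * c else 0)) _) _.
    move=> y; have := near x y; have := COS_bound (h x - h y).
    by case: eqP => [-> | _]; nra.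
  by rewrite bigR_sub bigR_const bigR_delta -/N; lra.
apply: Rle_trans (bigR_le row) _.
rewrite bigR_const -/N; have -> : N * (w * w * (N * (1 + eps) - c))
  = (N * w) * (N * w) * (1 + eps) - (N * w) * w * c by ring.
by rewrite card_w; lra.
Qed.

End SumOfCis.

Lemma exists_far_point (T : Type) (h : T -> R) (c : R) :
  (forall x y, cos (h x - h y) = 1 \/ cos (h x - h y) <= 1 - c) ->
  (exists x0 y0, cos (h x0 - h y0) <> 1) ->
  forall x, exists y, cos (h x - h y) <= 1 - c.
Proof.
move=> gap [x0 [y0 ne1]] x.
case: (gap x x0) => [hx0 | ]; last by exists x0.
case: (gap x y0) => [hy0 | ]; last by exists y0.
by case: ne1; rewrite -(cos_sub_eq1 hy0 hx0); congr cos; ring.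
Qed.

Lemma sqrt_le_1_sub_half X t : 0 <= t <= 2 -> X <= 1 - t -> sqrt X <= 1 - t / 2.
Proof.
move=> ht hX; rewrite -(sqrt_pow2 (1 - t / 2)); last lra.
by apply: sqrt_le_1_alt; nra.
Qed.

Lemma sqrt_le_1_sub_tenth (G X : R) (n : nat) : 2 <= G ->
  X <= 1 + 8 / 5 * / G ^ (n + 2) - 2 / G ^ 2 * / G ^ n ->
  sqrt X <= 1 - / 10 * / G ^ (n + 2).
Proof.
move=> hG; have -> : 2 / G ^ 2 * / G ^ n = 2 * / G ^ (n + 2).
  by rewrite pow_add; field; split; [ | apply/pow_nonzero]; lra.
set u := / G ^ (n + 2); have hu : 0 < u <= 1.
  have : 1 <= G ^ (n + 2) by apply: pow_R1_Rle; lra.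
  by split; [apply: Rinv_0_lt_compat | rewrite -Rinv_1; apply: Rinv_le_contravar]; lra.
move=> hX; rewrite (_ : / 10 * u = u / 5 / 2); last field.
by apply: sqrt_le_1_sub_half; lra.
Qed.

Lemma INR_expn m n : INR (m ^ n)%N = INR m ^ n.
Proof. by elim: n => [|n IHn]; rewrite ?expn0 // expnS mult_INR IHn. Qed.

Lemma card_Coord_le g k : (#|{: Coord g k}| <= k * k * g)%N.
Proof.
have := @leq_card {: Coord g k} _ (@sval _ _) (@val_inj _ _ _).
by rewrite !card_prod !card_ord.
Qed.

Lemma card_vecZg g k : #|vecZg g k| = (g ^ k)%N.
Proof. by rewrite card_ffun !card_ord. Qed.

Lemma card_Coord_mul_lt g k delta : (2 <= g)%N -> (2 <= k)%N -> 0 < delta ->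
  delta < 8 / 5 * / INR g ^ (k + 3) * / INR k ^ 2 ->
  INR #|{: Coord g k}| * delta < 8 / 5 * / INR g ^ (k + 2).
Proof.
move=> /leP hg /leP hk hd0 hd.
have hG : 2 <= INR g by have := le_INR 2 g hg; simpl INR; lra.
have hK : 2 <= INR k by have := le_INR 2 k hk; simpl INR; lra.
have card_le : INR #|{: Coord g k}| <= INR k ^ 2 * INR g.
  by have := le_INR _ _ (leP (card_Coord_le g k)); rewrite !mult_INR /=; lra.
have -> : 8 / 5 * / INR g ^ (k + 2)
    = INR k ^ 2 * INR g * (8 / 5 * / INR g ^ (k + 3) * / INR k ^ 2).
  by rewrite !pow_add; field; split; [ | split; [ | apply/pow_nonzero]]; lra.
have := Rmult_le_compat_r delta _ _ (Rlt_le _ _ hd0) card_le.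
by have := Rmult_lt_compat_l (INR k ^ 2 * INR g) _ _ ltac:(nra) hd; lra.
Qed.

Section PhaseDifferences.

Variables g k : nat.
Implicit Types (theta eta zeta : Coord g k -> R) (x y : vecZg g k).

Lemma dotZ_sub theta x y :
  dotZ theta x - dotZ theta y = \big[Rplus/0]_c (theta c * (Zvec x c - Zvec y c)).
Proof. by rewrite /dotZ -bigR_sub; apply: eq_bigr => c _; ring. Qed.

Lemma Zvec_sub_cases x y c :
  let d := Zvec x c - Zvec y c in d = 0 \/ d = 1 \/ d = -1.
Proof.
rewrite /Zvec /=; case: (diff_is x c); case: (diff_is y c);
  [left | right; left | right; right | left]; ring.
Qed.

Lemma Rint_dotZ_sub theta x y :
  (forall c, Rint (theta c)) -> Rint (dotZ theta x - dotZ theta y).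
Proof.
move=> thetaZ; rewrite dotZ_sub; apply: Rint_sum => c; apply: Rint_mul => //.
by case: (Zvec_sub_cases x y c) => [-> | [-> | ->]];
  [exists Z0 | exists (Z.pos 1) | exists (Z.neg 1)].
Qed.

Lemma cos_dotZ_sub_dichotomy eta : (2 <= g)%N ->
  (forall c, exists m : Z, eta c = IZR m * (2 * PI / INR g)) ->
  forall x y, cos (dotZ eta x - dotZ eta y) = 1 \/
              cos (dotZ eta x - dotZ eta y) <= 1 - 2 / INR g ^ 2.
Proof.
move=> hg eta_lat x y; have hPI := PI_RGT_0.
have hG : 0 < INR g by apply/lt_0_INR/ltP/ltnW.
set s := fun c => eta c / (2 * PI / INR g).
have sZ c : Rint (s c).
  by have [m em] := eta_lat c; exists m; rewrite /s /= em; field; split; lra.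
have -> : dotZ eta x - dotZ eta y = 2 * PI / INR g * (dotZ s x - dotZ s y).
  rewrite !dotZ_sub big_distrr; apply: eq_bigr => c _ /=.
  by rewrite /s; field; split; lra.
by have [n ->] := Rint_dotZ_sub x y sZ; exact: cos_2PI_div_mul_dichotomy.
Qed.

Lemma cos_dotZ_sub_perturb theta eta zeta delta :
  (forall c, Rabs (zeta c) < delta) ->
  (forall c, exists m : Z, theta c = eta c + zeta c + 2 * PI * IZR m) ->
  forall x y, cos (dotZ theta x - dotZ theta y)
              <= cos (dotZ eta x - dotZ eta y) + INR #|{: Coord g k}| * delta.
Proof.
move=> zeta_small theta_eq x y; have hPI := PI_RGT_0.
set nu := fun c => (theta c - eta c - zeta c) / (2 * PI).
have nuZ c : Rint (nu c).
  by have [m em] := theta_eq c; exists m; rewrite /nu /= em; field; lra.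
have -> : dotZ theta x - dotZ theta y = (dotZ eta x - dotZ eta y)
    + (dotZ zeta x - dotZ zeta y) + 2 * PI * (dotZ nu x - dotZ nu y).
  rewrite !dotZ_sub big_distrr -!big_split; apply: eq_bigr => c _ /=.
  by rewrite /nu; field; lra.
have [n ->] := Rint_dotZ_sub x y nuZ; rewrite cos_add_2PI_IZR.
have small : Rabs (dotZ zeta x - dotZ zeta y) <= INR #|{: Coord g k}| * delta.
  rewrite dotZ_sub -bigR_const; apply: bigR_abs_le => c; rewrite Rabs_mult.
  have d1 : Rabs (Zvec x c - Zvec y c) <= 1.
    by apply: Rabs_le; case: (Zvec_sub_cases x y c) => [-> | [-> | ->]]; lra.
  rewrite -[delta]Rmult_1_r; apply: Rmult_le_compat => //;
    [exact: Rabs_pos | exact: Rabs_pos | exact/Rlt_le/zeta_small].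
set A := dotZ eta x - dotZ eta y; set B := dotZ zeta x - dotZ zeta y in small *.
have := Rabs_cos_sub_le (A + B) A; rewrite (_ : A + B - A = B); last ring.
by have := Rle_abs (cos (A + B) - cos A); lra.
Qed.

End PhaseDifferences.

Theorem lemma3p1 (g k : nat) (hg : (2 <= g)%N) (hk : (2 <= k)%N)
  (delta : R) (hd0 : (0 < delta)%R)
  (hd : (delta < 8 / 5 * / (INR g ^ (k + 3)) * / (INR k ^ 2))%R)
  (theta : Coord g k -> R) :
  inRA delta theta ->
  (absPhi theta <= 1 - / 10 * / (INR g ^ (k + 2)))%R.
Proof.
move=> [eta [[eta_box eta_lat] [eta_notin [_ [zeta [zeta_small theta_eq]]]]]].
have {}hd : delta < 8 / 5 * / INR g ^ (k + 3) * / INR k ^ 2.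
  by move/RltP: hd; rewrite -!INRE [INR 8]INR_IZR_INZ [INR 5]INR_IZR_INZ.
have {}hd0 : 0 < delta by exact/RltP.
suff : absPhi theta <= 1 - / 10 * / INR g ^ (k + 2) by move/RleP.
have hG : 2 <= INR g by have := le_INR 2 g (leP hg); simpl INR; lra.
have hGk : 0 < INR g ^ k by apply: pow_lt; lra.
have card_w : INR #|vecZg g k| * / INR g ^ k = 1.
  by rewrite card_vecZg INR_expn; field; lra.
have gap := cos_dotZ_sub_dichotomy hg eta_lat.
have nontriv : exists x0 y0, cos (dotZ eta x0 - dotZ eta y0) <> 1.
  apply: NNPP => all1; apply: eta_notin; split => //.
  rewrite /inLambda /absPhi /RePhi /ImPhi norm2_sum_cis_eq1 ?sqrt_1 // => x y.
  by apply: NNPP => ne1; apply: all1; exists x, y.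
have := norm2_sum_cis_le card_w (cos_dotZ_sub_perturb zeta_small theta_eq)
          (exists_far_point gap nontriv).
have := card_Coord_mul_lt hg hk hd0 hd.
rewrite /absPhi /RePhi /ImPhi => eps_lt bound.
by apply: sqrt_le_1_sub_tenth; lra.
Qed.
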